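(* Let $S$ be a finite alphabet, $X = S^{\mathbb{Z}}$ the full shift, and $f : X \to X$ a cellular automaton. Then the language of the asymptotic set $\mathcal{A}(f)$ is a $\Sigma^1_1$ set (identifying $S^*$ with $\mathbb{N}$ via a computable bijection).
   Context: A cellular automaton on $X = S^{\mathbb{Z}}$ (with the product topology) is a continuous map $f: X\to X$ commuting with the shift. The asymptotic set of $f$ is $\mathcal{A}(f) = \bigcup_{x \in X} \bigcap_{n \in \mathbb{N}} \overline{\bigcup_{k \geq n} \{f^k(x)\}}$, i.e. the union over all $x$ of the sets of limit points of the orbit of $x$. The language of a (not necessarily closed) set $Y \subseteq S^{\mathbb{Z}}$ is the set of words $w \in S^*$ such that $w = y_{[0,k-1]}$ for some $y \in Y$ and $k \in \mathbb{N}$. A set $P \subseteq \mathbb{N}$ is $\Sigma^1_1$ if it is definable by a formula with one existential set quantifier, no universal set quantifier and arbitrary number quantifiers; equivalently $w \in P \iff (\exists C \subseteq \mathbb{N})(\forall m \in \mathbb{N})(\exists \ell \in \mathbb{N}) R(C,m,\ell,w)$ for a recursive predicate $R$. *)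

From mathcomp Require Import all_boot all_order all_algebra.
Set Implicit Arguments. Unset Strict Implicit. Unset Printing Implicit Defensive.
Import GRing.Theory Num.Theory.

Definition config (S : finType) := int -> S.

Definition shift (S : finType) (x : config S) : config S :=
  fun i => x (i + 1)%R.

(* x and y agree on the window [-n, n] (basic cylinder neighbourhoods
   of the product topology, S discrete) *)
Definition agree (S : finType) (n : nat) (x y : config S) : Prop :=
  forall i : int, (`|i| <= n)%N -> x i = y i.

(* continuity for the product topology, unfolded through the cylinder basis *)
Definition cfg_continuous (S : finType) (f : config S -> config S) : Prop :=
  forall (x : config S) (n : nat), exists m : nat,
    forall y : config S, agree m x y -> agree n (f x) (f y).

Definition is_CA (S : finType) (f : config S -> config S) : Prop :=
  cfg_continuous f /\ forall x : config S, f (shift x) = shift (f x).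

(* y is a limit point of the orbit of x:
   y \in \bigcap_N closure {f^k x | k >= N} *)
Definition omega_limit (S : finType) (f : config S -> config S)
  (x y : config S) : Prop :=
  forall (n N : nat), exists k : nat, (N <= k)%N /\ agree n (iter k f x) y.

Definition asymptotic_set (S : finType) (f : config S -> config S)
  (y : config S) : Prop :=
  exists x : config S, omega_limit f x y.

Definition language (S : finType) (Y : config S -> Prop) (w : seq S) : Prop :=
  exists y : config S, Y y /\ w = mkseq (fun i => y (Posz i)) (size w).

(* computable bijection S^* -> N (for S nonempty): bijective base-|S|
   numeration, little endian, letters numbered 1..|S| via enum_rank *)
Definition word_code (S : finType) (w : seq S) : nat :=
  foldr (fun a acc => (nat_of_ord (enum_rank a)).+1 + #|S| * acc)%N 0%N w.

Inductive prf : Type :=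
| PZero
| PSucc
| PProj (i : nat)                (* i-th argument (0 if absent) *)
| POracle
| PComp (f : prf) (gs : list prf)
| PRec (f g : prf)
| PMu (f : prf).

Inductive prf_eval (C : nat -> bool) : prf -> list nat -> nat -> Prop :=
| ev_zero xs : prf_eval C PZero xs 0
| ev_succ xs : prf_eval C PSucc xs (head 0%N xs).+1
| ev_proj i xs : prf_eval C (PProj i) xs (nth 0%N xs i)
| ev_oracle xs : prf_eval C POracle xs (if C (head 0%N xs) then 1%N else 0%N)
| ev_comp f gs xs ys v :
    prf_evals C gs xs ys -> prf_eval C f ys v -> prf_eval C (PComp f gs) xs v
| ev_rec0 f g xs v : prf_eval C f xs v -> prf_eval C (PRec f g) (0%N :: xs) v
| ev_recS f g n xs u v :
    prf_eval C (PRec f g) (n :: xs) u -> prf_eval C g (n :: u :: xs) v ->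
    prf_eval C (PRec f g) (n.+1 :: xs) v
| ev_mu f xs n :
    prf_eval C f (n :: xs) 0%N ->
    (forall m, (m < n)%N -> exists k, k <> 0%N /\ prf_eval C f (m :: xs) k) ->
    prf_eval C (PMu f) xs n
with prf_evals (C : nat -> bool) : list prf -> list nat -> list nat -> Prop :=
| evs_nil xs : prf_evals C nil xs nil
| evs_cons g gs xs v vs :
    prf_eval C g xs v -> prf_evals C gs xs vs -> prf_evals C (g :: gs) xs (v :: vs).

(* a recursive predicate R(C, m, l, w) on 2^N x N^3: a code computing its
   characteristic function (value 1 = true) for every oracle and every input *)
Definition recursive_pred4 (e : prf) : Prop :=
  forall (C : nat -> bool) (m l w : nat),
    prf_eval C e [:: m; l; w] 0%N \/ prf_eval C e [:: m; l; w] 1%N.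

Definition Sigma11 (P : nat -> Prop) : Prop :=
  exists e : prf, recursive_pred4 e /\
    forall w : nat, P w <->
      exists C : nat -> bool, forall m : nat, exists l : nat,
        prf_eval C e [:: m; l; w] 1%N.

From mathcomp Require Import all_boot all_order all_algebra zify.
From Stdlib Require Import FunctionalExtensionality ClassicalEpsilon.
Set Implicit Arguments. Unset Strict Implicit. Unset Printing Implicit Defensive.
Import GRing.Theory.

(* The set quantifier guesses the table
   whose rows are y, x, f x, f^2 x, ...; the arithmetical part checks, one
   requirement m at a time, that each row follows from the previous one by the
   local rule of f (which exists by compactness of S^Z), that for all n and N
   some row after N agrees with y on [-n, n], and that the word is a prefix of
   y.  Every check is a bounded-sum term in the oracle, hence computed by a
   mu-free partial recursive code. *)

(** * Oracle terms and their compilation to partial recursive codes *)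

(* Arithmetic terms over an oracle; [ASum b t] and [AProd b t] bind the de
   Bruijn variable 0 of [t], which ranges over [0, b). *)
Inductive aterm :=
| AVar of nat
| AConst of nat
| AAdd of aterm & aterm
| AMul of aterm & aterm
| ASub of aterm & aterm
| AOracle of aterm
| ASum of aterm & aterm
| AProd of aterm & aterm.

Fixpoint aeval (C : nat -> bool) (env : seq nat) (t : aterm) : nat :=
  match t with
  | AVar i => nth 0 env i
  | AConst c => c
  | AAdd a b => aeval C env a + aeval C env b
  | AMul a b => aeval C env a * aeval C env b
  | ASub a b => aeval C env a - aeval C env b
  | AOracle a => C (aeval C env a)
  | ASum b t => \sum_(0 <= i < aeval C env b) aeval C (i :: env) t
  | AProd b t => \prod_(0 <= i < aeval C env b) aeval C (i :: env) t
  end.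

Fixpoint prf_const (c : nat) : prf :=
  if c is c'.+1 then PComp PSucc [:: prf_const c'] else PZero.
Definition prf_add := PRec (PProj 0) (PComp PSucc [:: PProj 1]).
Definition prf_mul := PRec PZero (PComp prf_add [:: PProj 1; PProj 2]).
Definition prf_pred := PRec PZero (PProj 0).
Definition prf_subr := PRec (PProj 0) (PComp prf_pred [:: PProj 1]).
Definition prf_projs (a k : nat) : seq prf := map PProj (iota a k).

Definition prf_bigop (unit op body : prf) (k : nat) : prf :=
  PRec unit (PComp op [:: PProj 1; PComp body (PProj 0 :: prf_projs 2 k)]).

Fixpoint compile (k : nat) (t : aterm) : prf :=
  match t with
  | AVar i => PProj i
  | AConst c => prf_const c
  | AAdd a b => PComp prf_add [:: compile k a; compile k b]
  | AMul a b => PComp prf_mul [:: compile k a; compile k b]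
  | ASub a b => PComp prf_subr [:: compile k b; compile k a]
  | AOracle a => PComp POracle [:: compile k a]
  | ASum b t => PComp (prf_bigop PZero prf_add (compile k.+1 t) k)
                      (compile k b :: prf_projs 0 k)
  | AProd b t => PComp (prf_bigop (prf_const 1) prf_mul (compile k.+1 t) k)
                       (compile k b :: prf_projs 0 k)
  end.

Section Evaluation.
Variable C : nat -> bool.

Lemma prf_evals1 g xs v : prf_eval C g xs v -> prf_evals C [:: g] xs [:: v].
Proof. by move=> hg; apply: evs_cons hg (evs_nil _ _). Qed.

Lemma prf_evals2 g1 g2 xs v1 v2 : prf_eval C g1 xs v1 -> prf_eval C g2 xs v2 ->
  prf_evals C [:: g1; g2] xs [:: v1; v2].
Proof. by move=> h1 h2; apply: evs_cons h1 (prf_evals1 h2). Qed.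

Lemma prf_eval_const xs c : prf_eval C (prf_const c) xs c.
Proof.
elim: c => [|c IH]; first exact: ev_zero.
exact: ev_comp (prf_evals1 IH) (ev_succ _ _).
Qed.

Lemma prf_eval_add a b : prf_eval C prf_add [:: a; b] (a + b).
Proof.
elim: a => [|a IH]; first exact: ev_rec0 (ev_proj _ _ _).
apply: ev_recS IH _; exact: ev_comp (prf_evals1 (ev_proj _ _ _)) (ev_succ _ _).
Qed.

Lemma prf_eval_mul a b : prf_eval C prf_mul [:: a; b] (a * b).
Proof.
elim: a => [|a IH]; first exact: ev_rec0 (ev_zero _ _).
apply: ev_recS IH _; rewrite mulSn addnC.
exact: ev_comp (prf_evals2 (ev_proj _ _ _) (ev_proj _ _ _)) (prf_eval_add _ _).
Qed.

Lemma prf_eval_pred a : prf_eval C prf_pred [:: a] a.-1.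
Proof.
elim: a => [|a IH]; first exact: ev_rec0 (ev_zero _ _).
exact: ev_recS IH (ev_proj _ 0 [:: a; a.-1]).
Qed.

Lemma prf_eval_subr a b : prf_eval C prf_subr [:: b; a] (a - b).
Proof.
elim: b => [|b IH]; first by rewrite subn0; exact: ev_rec0 (ev_proj _ _ _).
apply: ev_recS IH _; rewrite subnS.
exact: ev_comp (prf_evals1 (ev_proj _ _ _)) (prf_eval_pred _).
Qed.

Lemma prf_evals_projs a k xs :
  prf_evals C (prf_projs a k) xs (map (nth 0 xs) (iota a k)).
Proof.
elim: k a => [|k IH] a; first exact: evs_nil.
exact: evs_cons (ev_proj _ _ _) (IH _).
Qed.

Lemma prf_eval_bigop idx (op : Monoid.law idx) pu po body k env F n :
  size env = k ->
  (forall xs, prf_eval C pu xs idx) ->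
  (forall a b, prf_eval C po [:: a; b] (op a b)) ->
  (forall i, prf_eval C body (i :: env) (F i)) ->
  prf_eval C (prf_bigop pu po body k) (n :: env) (\big[op/idx]_(0 <= i < n) F i).
Proof.
move=> hk hu ho hb; elim: n => [|n IH]; first by rewrite big_geq //; exact: ev_rec0.
apply: ev_recS IH _; rewrite big_nat_recr //.
apply: ev_comp (ho _ _); apply: prf_evals2; first exact: ev_proj.
apply: ev_comp (hb n); apply: evs_cons; first exact: ev_proj.
have := prf_evals_projs 2 k [:: n, \big[op/idx]_(0 <= i < n) F i & env].
by rewrite map_nth_iota /= ?drop0 -hk ?take_size ?subn2.
Qed.

Lemma compile_eval t k env : size env = k ->
  prf_eval C (compile k t) env (aeval C env t).
Proof.
elim: t k env => [i|c|a IHa b IHb|a IHa b IHb|a IHa b IHb|a IHa|b IHb t IHt|b IHb t IHt]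
  k env hk /=.
- exact: ev_proj.
- exact: prf_eval_const.
- exact: ev_comp (prf_evals2 (IHa _ _ hk) (IHb _ _ hk)) (prf_eval_add _ _).
- exact: ev_comp (prf_evals2 (IHa _ _ hk) (IHb _ _ hk)) (prf_eval_mul _ _).
- exact: ev_comp (prf_evals2 (IHb _ _ hk) (IHa _ _ hk)) (prf_eval_subr _ _).
- by apply: ev_comp (prf_evals1 (IHa _ _ hk)) _; case: (C _) (ev_oracle C [:: aeval C env a]).
- apply: ev_comp (evs_cons (IHb _ _ hk) (prf_evals_projs _ _ _)) _.
  rewrite map_nth_iota0 -hk // take_size.
  apply: prf_eval_bigop => //; [exact: ev_zero | exact: prf_eval_add |].
  by move=> i; apply: IHt; rewrite /= hk.
- apply: ev_comp (evs_cons (IHb _ _ hk) (prf_evals_projs _ _ _)) _.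
  rewrite map_nth_iota0 -hk // take_size.
  apply: prf_eval_bigop => //; [exact: (prf_eval_const^~ 1) | exact: prf_eval_mul |].
  by move=> i; apply: IHt; rewrite /= hk.
Qed.

End Evaluation.

Fixpoint mu_free (p : prf) : bool :=
  match p with
  | PComp f gs => mu_free f && all mu_free gs
  | PRec f g => mu_free f && mu_free g
  | PMu _ => false
  | _ => true
  end.

Scheme prf_eval_mut := Induction for prf_eval Sort Prop
  with prf_evals_mut := Induction for prf_evals Sort Prop.

Lemma prf_eval_det C p xs v v' : mu_free p ->
  prf_eval C p xs v -> prf_eval C p xs v' -> v = v'.
Proof.
move=> mp hv; move: hv mp v'.
apply: (prf_eval_mut
  (P := fun p xs v _ => mu_free p -> forall v', prf_eval C p xs v' -> v = v')
  (P0 := fun gs xs vs _ => all mu_free gs ->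
           forall vs', prf_evals C gs xs vs' -> vs = vs')).
- by move=> xs' _ v'' h; inversion h.
- by move=> xs' _ v'' h; inversion h.
- by move=> i xs' _ v'' h; inversion h.
- by move=> xs' _ v'' h; inversion h.
- move=> f gs xs' ys w _ IHgs _ IHf /andP[mf mgs] v'' h; inversion h; subst.
  have E := IHgs mgs _ ltac:(eassumption); subst ys; exact: IHf.
- by move=> f g xs' w _ IHf /andP[mf _] v'' h; inversion h; subst; apply: IHf.
- move=> f g n xs' u w _ IH1 _ IH2 mfg v'' h; inversion h; subst.
  have E := IH1 mfg _ ltac:(eassumption); subst u.
  by case/andP: mfg => _ mg; apply: IH2.
- by [].
- by move=> xs' _ vs' h; inversion h.
- move=> g gs xs' w ws _ IHg _ IHgs /andP[mg mgs] vs' h; inversion h; subst.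
  have E1 := IHg mg _ ltac:(eassumption); have E2 := IHgs mgs _ ltac:(eassumption).
  by rewrite E1 E2.
Qed.

Lemma mu_free_compile k t : mu_free (compile k t).
Proof.
have mprojs a k' : all mu_free (prf_projs a k') by rewrite all_map; apply/allP.
have mconst c : mu_free (prf_const c) by elim: c => //= c ->.
elim: t k => //= [a IHa b IHb|a IHa b IHb|a IHa b IHb|a IHa|b IHb t IHt|b IHb t IHt] k;
  by rewrite ?IHa ?IHb ?IHt ?mprojs ?mconst.
Qed.

Lemma Sigma11_aterm (t : aterm) (R : (nat -> bool) -> nat -> nat -> nat -> bool)
    (P : nat -> Prop) :
  (forall C m l w, aeval C [:: m; l; w] t = R C m l w) ->
  (forall w, P w <-> exists C, forall m, exists l, R C m l w) ->
  Sigma11 P.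
Proof.
move=> tR PR; exists (compile 3 t).
have ev C m l w := compile_eval C t (env := [:: m; l; w]) (erefl 3).
split=> [C m l w|w]; first by have := ev C m l w; rewrite tR; case: (R C m l w); [right|left].
rewrite PR; split=> -[C HC]; exists C => m; have [l hl] := HC m; exists l.
  by have := ev C m l w; rewrite tR hl.
by have := prf_eval_det (mu_free_compile 3 t) (ev C m l w) hl; rewrite tR; case: (R C m l w).
Qed.

Lemma aeval_sum C env b t :
  aeval C env (ASum b t) = \sum_(0 <= i < aeval C env b) aeval C (i :: env) t.
Proof. by []. Qed.

Lemma aeval_add C env a b : aeval C env (AAdd a b) = aeval C env a + aeval C env b.
Proof. by []. Qed.

Lemma aeval_mul C env a b : aeval C env (AMul a b) = aeval C env a * aeval C env b.
Proof. by []. Qed.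

Lemma aeval_sub C env a b : aeval C env (ASub a b) = aeval C env a - aeval C env b.
Proof. by []. Qed.

Lemma aeval_oracle C env a : aeval C env (AOracle a) = C (aeval C env a).
Proof. by []. Qed.

Fixpoint weaken_at (c : nat) (t : aterm) : aterm :=
  match t with
  | AVar i => AVar (bump c i)
  | AConst n => AConst n
  | AAdd a b => AAdd (weaken_at c a) (weaken_at c b)
  | AMul a b => AMul (weaken_at c a) (weaken_at c b)
  | ASub a b => ASub (weaken_at c a) (weaken_at c b)
  | AOracle a => AOracle (weaken_at c a)
  | ASum b t => ASum (weaken_at c b) (weaken_at c.+1 t)
  | AProd b t => AProd (weaken_at c b) (weaken_at c.+1 t)
  end.

Definition weaken : aterm -> aterm := weaken_at 0.

Lemma aeval_weaken_at C t c env v : c <= size env ->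
  aeval C (take c env ++ v :: drop c env) (weaken_at c t) = aeval C env t.
Proof.
elim: t c env => [i|n|a IHa b IHb|a IHa b IHb|a IHa b IHb|a IHa|b IHb t IHt|b IHb t IHt]
  c env hc /=; rewrite ?IHa ?IHb //.
- rewrite nth_cat size_take_min (minn_idPl hc) /bump.
  case: (ltnP i c) => hi; first by rewrite hi nth_take.
  by rewrite ltnNge leqW //= add1n subSn //= nth_drop subnKC.
- by apply: eq_bigr => i _; rewrite -(IHt c.+1 (i :: env)).
- by apply: eq_bigr => i _; rewrite -(IHt c.+1 (i :: env)).
Qed.

Lemma aeval_weaken C t env v : aeval C (v :: env) (weaken t) = aeval C env t.
Proof. by rewrite -(aeval_weaken_at C t v (leq0n (size env))) take0 drop0. Qed.

(* Truth values are encoded by 0 and 1. *)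
Definition aeq a b := ASub (AConst 1) (AAdd (ASub a b) (ASub b a)).
Definition ale a b := ASub (AConst 1) (ASub a b).
Definition aall b t := aeq (ASum b (ASub (AConst 1) t)) (AConst 0).

Lemma aeval_eq C env a b : aeval C env (aeq a b) = (aeval C env a == aeval C env b).
Proof. by rewrite /aeq /=; case: eqP => h; lia. Qed.

Lemma aeval_le C env a b : aeval C env (ale a b) = (aeval C env a <= aeval C env b).
Proof. by rewrite /ale /=; case: leqP => h; lia. Qed.

Lemma aeval_all C env b t (P : pred nat) :
  (forall i, aeval C (i :: env) t = P i) ->
  aeval C env (aall b t) = all P (iota 0 (aeval C env b)).
Proof.
move=> tP; rewrite /aall aeval_eq /=; congr nat_of_bool.
elim: (aeval C env b) => [|n IH]; first by rewrite big_geq.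
by rewrite big_nat_recr // -[n.+1]addn1 iotaD all_cat /= andbT addn_eq0 IH tP; case: (P n).
Qed.

(* The Cantor pairing and its inverse, with the diagonal index computed by a
   bounded sum so that both are expressible as terms. *)
Definition tri n := \sum_(0 <= i < n.+1) i.
Definition npair a b := tri (a + b) + b.
Definition ndiag n := \sum_(0 <= t < n) (tri t.+1 <= n).
Definition nsnd n := n - tri (ndiag n).
Definition nfst n := ndiag n - nsnd n.

Lemma triS n : tri n.+1 = tri n + n.+1.
Proof. by rewrite /tri big_nat_recr. Qed.

Lemma leq_tri n : n <= tri n.
Proof. by case: n => // n; rewrite triS; lia. Qed.

Lemma tri_monotone : {homo tri : m n / m <= n}.
Proof.
move=> m n /subnK <-; elim: (n - m) => // k IH.
by rewrite addSn triS; lia.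
Qed.

Lemma sum_nat_ltn n c : c <= n -> \sum_(0 <= j < n) (j < c) = c.
Proof.
move=> hc; rewrite (big_cat_nat (leq0n c) hc) /=.
rewrite (eq_big_nat _ _ (F2 := fun=> 1)); last by move=> i /andP[_ ->].
rewrite [X in _ + X]big1_seq ?sum_nat_const_nat ?muln1 ?subn0 ?addn0 //.
by move=> i /andP[_]; rewrite mem_index_iota => /andP[hi _]; rewrite ltnNge hi.
Qed.

Lemma ndiag_pair a b : ndiag (npair a b) = a + b.
Proof.
have tri_le t : (tri t.+1 <= npair a b) = (t < a + b).
  case: (ltnP t (a + b)) => ht; first by apply: leq_trans (tri_monotone ht) (leq_addr _ _).
  have lt_pair : npair a b < tri (a + b).+1 by rewrite triS /npair; lia.
  by apply/negbTE; rewrite -ltnNge (leq_trans lt_pair (tri_monotone (ht : a + b < t.+1))).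
rewrite /ndiag (eq_bigr (fun t => nat_of_bool (t < a + b))) => [|t _]; last by rewrite tri_le.
rewrite sum_nat_ltn //.
by have := leq_tri (a + b); rewrite /npair; lia.
Qed.

Lemma nsnd_pair a b : nsnd (npair a b) = b.
Proof. by rewrite /nsnd ndiag_pair /npair addKn. Qed.

Lemma nfst_pair a b : nfst (npair a b) = a.
Proof. by rewrite /nfst nsnd_pair ndiag_pair addnK. Qed.

Definition atri x := ASum (AAdd x (AConst 1)) (AVar 0).
Definition apair a b := AAdd (atri (AAdd a b)) b.
Definition adiag n := ASum n (ale (atri (AAdd (AVar 0) (AConst 1))) (weaken n)).
Definition asnd n := ASub n (atri (adiag n)).
Definition afst n := ASub (adiag n) (asnd n).

Lemma aeval_tri C env x : aeval C env (atri x) = tri (aeval C env x).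
Proof. by rewrite /atri /= addn1. Qed.

Lemma aeval_pair C env a b : aeval C env (apair a b) = npair (aeval C env a) (aeval C env b).
Proof. by rewrite /apair /= addn1. Qed.

Lemma aeval_diag C env n : aeval C env (adiag n) = ndiag (aeval C env n).
Proof.
rewrite /adiag aeval_sum; apply: eq_bigr => i _.
by rewrite aeval_le aeval_tri aeval_weaken /= addn1.
Qed.

Lemma aeval_snd C env n : aeval C env (asnd n) = nsnd (aeval C env n).
Proof. by rewrite /asnd aeval_sub aeval_tri aeval_diag. Qed.

Lemma aeval_fst C env n : aeval C env (afst n) = nfst (aeval C env n).
Proof. by rewrite /afst aeval_sub aeval_snd aeval_diag. Qed.

Fixpoint atable (s : nat) (ts : seq aterm) (G : seq nat -> nat) : aterm :=
  if ts is t :: ts' then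
    foldr (fun j acc =>
             AAdd (AMul (aeq t (AConst j)) (atable s ts' (fun u => G (j :: u)))) acc)
          (AConst 0) (iota 0 s)
  else AConst (G [::]).

Lemma aeval_select C env t (X : nat -> aterm) js : uniq js ->
  aeval C env (foldr (fun j acc => AAdd (AMul (aeq t (AConst j)) (X j)) acc) (AConst 0) js) =
  if aeval C env t \in js then aeval C env (X (aeval C env t)) else 0.
Proof.
elim: js => //= j js IH /andP[hj hu]; rewrite IH // in_cons.
case: (eqVneq (aeval C env t) j) => [->|ne]; first by rewrite (negbTE hj) subnn /=; lia.
by have -> : 1 - (aeval C env t - j + (j - aeval C env t)) = 0 by lia.
Qed.

Lemma aeval_table C env s ts G : all (fun t => aeval C env t < s) ts ->
  aeval C env (atable s ts G) = G (map (aeval C env) ts).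
Proof.
elim: ts G => //= t ts IH G /andP[ht hts].
by rewrite aeval_select ?iota_uniq // mem_iota /= ht IH.
Qed.

(** * Compactness of the full shift and local rules *)

Lemma infinitely_often_value (T : finType) (P : nat -> Prop) (h : nat -> T) :
  (forall N, exists r, N <= r /\ P r) ->
  exists t, forall N, exists r, [/\ N <= r, P r & h r = t].
Proof.
move=> infP; apply: NNPP => no_value.
have bound t : exists N, forall r, N <= r -> P r -> h r <> t.
  apply: NNPP => nbound; apply: no_value; exists t => N; apply: NNPP => nr.
  by apply: nbound; exists N => r hr hP ht; apply: nr; exists r.
have [N HN] := choice _ bound.
have [r [hr hP]] := infP (\max_t N t).
exact: (HN (h r) r (leq_trans (leq_bigmax (h r)) hr) hP).
Qed.

Section Configurations.
Variable S : finType.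
Implicit Types (x y z : config S) (u : nat -> config S).

Lemma agree_sym n x y : agree n x y -> agree n y x.
Proof. by move=> h i hi; rewrite h. Qed.

Lemma agree_trans n x y z : agree n x y -> agree n y z -> agree n x z.
Proof. by move=> h1 h2 i hi; rewrite h1 ?h2. Qed.

Lemma agree_le m n x y : m <= n -> agree n x y -> agree m x y.
Proof. by move=> hmn h i hi; apply: h; apply: leq_trans hi hmn. Qed.

Definition cluster_at u n z := forall N, exists r, N <= r /\ agree n (u r) z.

Lemma cluster_at_succ u n z :
  cluster_at u n z -> exists z', agree n z z' /\ cluster_at u n.+1 z'.
Proof.
move=> hz.
have [[a b] hab] := infinitely_often_value
  (fun r => (u r (- Posz n.+1)%R, u r (Posz n.+1))) hz.
pose z' j := if j == (- Posz n.+1)%R then a else if j == Posz n.+1 then b else z j.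
have zz' : agree n z z' by move=> j hj; rewrite /z'; do 2![case: eqP => [e|_]; first lia].
exists z'; split=> // N; have [r [hr hzr /pair_equal_spec[ha hb]]] := hab N.
exists r; split=> // j hj; case: (leqP `|j| n) => hjn; first by rewrite hzr // zz'.
have [->|->] : j = Posz n.+1 \/ j = (- Posz n.+1)%R by lia.
- by rewrite /z'; case: eqP => [|_]; [lia | rewrite eqxx].
- by rewrite /z' eqxx.
Qed.

Lemma cluster_point_exists u : exists z, forall n, cluster_at u n z.
Proof.
have [t0 ht0] := infinitely_often_value (fun r => u r 0) (P := fun _ => True)
  (fun N => ex_intro _ N (conj (leqnn N) I)).
have cluster0 : cluster_at u 0 (fun _ => t0).
  move=> N; have [r [hr _ e]] := ht0 N; exists r; split=> // j hj.
  by have -> : j = 0%R by lia.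
have step n z : exists z', cluster_at u n z -> agree n z z' /\ cluster_at u n.+1 z'.
  case: (classic (cluster_at u n z)) => [/cluster_at_succ[z' hz']|nz]; last by exists z.
  by exists z'.
have [next hnext] := choice _ (fun nz : nat * config S => step nz.1 nz.2).
pose fix zs n := if n is n'.+1 then next (n', zs n') else fun _ => t0.
have cluster_zs n : cluster_at u n (zs n).
  by elim: n => // n IH; exact: (hnext (n, zs n) IH).2.
have agree_zs n m : n <= m -> agree n (zs n) (zs m).
  move=> /subnK <-; elim: (m - n) => [|k IH]; first by move=> i.
  apply: agree_trans IH (agree_le (leq_addl k n) _).
  exact: (hnext (k + n, zs (k + n)) (cluster_zs _)).1.
exists (fun j => zs `|j| j) => n N.
have [r [hr hur]] := cluster_zs n N; exists r; split=> //.
by apply: agree_trans hur _ => j hj; rewrite (agree_zs _ _ hj).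
Qed.

Lemma uniform_local_rule (f : config S -> config S) : cfg_continuous f ->
  exists r, forall x y, agree r x y -> f x 0%R = f y 0%R.
Proof.
move=> hc; apply: NNPP => no_radius.
have bad r : exists p : config S * config S, agree r p.1 p.2 /\ f p.1 0%R <> f p.2 0%R.
  apply: NNPP => nbad; apply: no_radius; exists r => x y hxy; apply: NNPP => ne.
  by apply: nbad; exists (x, y).
have [p hp] := choice _ bad.
have [z hz] := cluster_point_exists (fun r => (p r).1).
have [m hm] := hc z 0.
have [r [hr hzr]] := hz m m.
have a1 : agree m z (p r).1 by apply: agree_sym.
have a2 : agree m z (p r).2 by apply: agree_trans a1 (agree_le hr (hp r).1).
by apply: (hp r).2; rewrite -(hm _ a1 0%R) // (hm _ a2 0%R).
Qed.

Definition translate (i : int) z : config S := fun j => z (j + i)%R.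

Lemma CA_translate f : is_CA f -> forall i z, f (translate i z) = translate i (f z).
Proof.
move=> [_ f_shift].
have translate_add a b z : translate a (translate b z) = translate (a + b) z.
  by apply: functional_extensionality => j; rewrite /translate addrA.
have translate0 z : translate 0 z = z.
  by apply: functional_extensionality => j; rewrite /translate addr0.
have translate_nat n z : f (translate (Posz n) z) = translate (Posz n) (f z).
  elim: n z => [|n IH] z; first by rewrite !translate0.
  have shiftE y : translate (Posz n.+1) y = shift (translate (Posz n) y).
    by rewrite /shift -[X in _ = X]/(translate 1 _) translate_add addrC -PoszD addn1.
  by rewrite !shiftE f_shift IH.
move=> [n|n] z; first exact: translate_nat.
pose y := translate (Negz n) z.
have zE : z = translate (Posz n.+1) y by rewrite /y translate_add NegzE subrr translate0.
by rewrite [in RHS]zE translate_nat translate_add NegzE addrC subrr translate0.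
Qed.

Lemma CA_at f : is_CA f -> forall i z, f z i = f (translate i z) 0%R.
Proof. by move=> hf i z; rewrite CA_translate // /translate add0r. Qed.

End Configurations.

Section SymbolCodes.
Variable S : finType.

Definition scode (a : S) : nat := enum_rank a.
Definition sdecode (a0 : S) (n : nat) : S := nth a0 (enum S) n.

Lemma scodeK a0 : cancel scode (sdecode a0).
Proof. exact: nth_enum_rank. Qed.

Lemma scode_lt a : scode a < #|S|.
Proof. exact: ltn_ord. Qed.

Lemma sdecodeK a0 n : n < #|S| -> scode (sdecode a0 n) = n.
Proof.
by move=> hn; rewrite /sdecode -[n]/(nat_of_ord (Ordinal hn)) -enum_val_nth /scode enum_valK.
Qed.

Lemma word_code_mkseq (g : nat -> S) l :
  word_code (mkseq g l) = \sum_(0 <= i < l) (scode (g i) + 1) * #|S| ^ i.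
Proof.
elim: l g => [|l IH] g; first by rewrite big_geq.
rewrite /mkseq /= -[in LHS](addn0 1) iotaDl -map_comp -/(mkseq _ _) IH.
rewrite big_nat_recl // expn0 muln1 addn1 big_distrr; congr (_ + _).
by apply: eq_bigr => i _; rewrite /= expnS add1n mulnCA.
Qed.

Definition window_config (a0 : S) (r : nat) (cs : seq nat) : config S :=
  fun j => sdecode a0 (nth 0 cs `|(j + Posz r)%R|).

Definition window (z : config S) (i : int) (r : nat) : seq nat :=
  mkseq (fun t => scode (z (i + (Posz t - Posz r)))%R) (r + r).+1.

Lemma CA_window f a0 r : is_CA f ->
  (forall x y, agree r x y -> f x 0%R = f y 0%R) ->
  forall z i, f z i = f (window_config a0 r (window z i r)) 0%R.
Proof.
move=> hf hr z i; rewrite (CA_at hf); apply: hr => j hj.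
rewrite /translate /window_config /window nth_mkseq; last by lia.
by rewrite scodeK; congr z; lia.
Qed.

End SymbolCodes.

(** * Tables of symbols coded by an oracle *)

Definition int_pos (i : int) : nat := if i is Posz n then n else 0.
Definition int_neg (i : int) : nat := if i is Negz n then n.+1 else 0.

Lemma int_pos_neg i : (Posz (int_pos i) - Posz (int_neg i))%R = i.
Proof. by case: i => n /=; rewrite ?subr0 // NegzE sub0r. Qed.

(* An oracle describes a table of numbers indexed by a row [k] and a position
   [p - q] of Z: the entry is stored in unary in the [s - 1] oracle bits at the
   addresses [cell_addr k p q j], so that it can be read by a bounded sum. *)
Definition cell_addr (k p q j : nat) : nat :=
  npair (npair k (npair (p - q) (q - p))) j.

Definition oracle_cell (s : nat) (C : nat -> bool) (k p q : nat) : nat :=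
  \sum_(0 <= j < s.-1) C (cell_addr k p q j).

Lemma oracle_cell_lt s C k p q : 0 < s -> oracle_cell s C k p q < s.
Proof.
move=> s_gt0; rewrite -(prednK s_gt0) ltnS.
apply: leq_trans (_ : \sum_(0 <= j < s.-1) 1 <= _).
  by apply: leq_sum => j _; case: (C _).
by rewrite sum_nat_const_nat muln1 subn0.
Qed.

Lemma oracle_cell_diff s C k p q p' q' : (Posz p - Posz q = Posz p' - Posz q')%R ->
  oracle_cell s C k p q = oracle_cell s C k p' q'.
Proof.
move=> e; apply: eq_bigr => j _; rewrite /cell_addr.
by have [-> ->] : p - q = p' - q' /\ q - p = q' - p' by lia.
Qed.

Definition table_oracle (T : nat -> int -> nat) (a : nat) : bool :=
  let kpq := nfst a in
  nsnd a < T (nfst kpq) (Posz (nfst (nsnd kpq)) - Posz (nsnd (nsnd kpq)))%R.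

Lemma oracle_cell_table s (T : nat -> int -> nat) k p q :
  (forall k i, T k i < s) ->
  oracle_cell s (table_oracle T) k p q = T k (Posz p - Posz q)%R.
Proof.
move=> Ts; rewrite /oracle_cell.
rewrite (eq_bigr (fun j => nat_of_bool (j < T k (Posz p - Posz q)%R))) => [|j _].
  by rewrite sum_nat_ltn //; have := Ts k (Posz p - Posz q)%R; lia.
rewrite /table_oracle /cell_addr !(nfst_pair, nsnd_pair).
by have -> : (Posz (p - q) - Posz (q - p) = Posz p - Posz q)%R by lia.
Qed.

Definition acell (s : nat) (k p q : aterm) : aterm :=
  ASum (AConst s.-1) (AOracle (apair (apair (weaken k)
    (apair (ASub (weaken p) (weaken q)) (ASub (weaken q) (weaken p)))) (AVar 0))).

Lemma aeval_cell C env s k p q : aeval C env (acell s k p q) =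
  oracle_cell s C (aeval C env k) (aeval C env p) (aeval C env q).
Proof.
rewrite /acell aeval_sum; apply: eq_bigr => j _.
by rewrite aeval_oracle !aeval_pair !aeval_sub !aeval_weaken.
Qed.

Lemma aeval_cell_lt C env s k p q : 0 < s -> aeval C env (acell s k p q) < s.
Proof. by move=> s_gt0; rewrite aeval_cell oracle_cell_lt. Qed.

Section Verifier.
Variables (s r : nat) (F : seq nat -> nat) (C : nat -> bool).
Local Notation cell := (oracle_cell s C).

(* The kind of a requirement [m] is [nfst m]: row [k + 2] of the table follows
   from row [k + 1] by the local rule [F] at position [p - q]; row 0 agrees on
   [[-n, n]] with some row [l + 1] with [l >= N]; [w] codes the first [l]
   letters of row 0. *)
Definition step_ok (a : nat) : bool :=
  let k := nfst a in let p := nfst (nsnd a) in let q := nsnd (nsnd a) in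
  cell k.+2 p q == F [seq cell k.+1 (p + t) (q + r) | t <- iota 0 (r + r).+1].

Definition return_ok (a l : nat) : bool :=
  let n := nfst a in let N := nsnd a in
  (N <= l) && all (fun i => (cell l.+1 i 0 == cell 0 i 0) && (cell l.+1 0 i == cell 0 0 i))
                  (iota 0 n.+1).

Definition prefix_ok (l w : nat) : bool :=
  \sum_(0 <= i < l) (cell 0 i 0 + 1) * s ^ i == w.

Definition verifier (m l w : nat) : bool :=
  match nfst m with
  | 0 => step_ok (nsnd m)
  | 1 => return_ok (nsnd m) l
  | _ => prefix_ok l w
  end.

End Verifier.

Definition astep_cells s r (a : aterm) : seq aterm :=
  [seq acell s (AAdd (afst a) (AConst 1)) (AAdd (afst (asnd a)) (AConst t))
         (AAdd (asnd (asnd a)) (AConst r)) | t <- iota 0 (r + r).+1].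

Definition astep s r F (a : aterm) : aterm :=
  aeq (acell s (AAdd (afst a) (AConst 2)) (afst (asnd a)) (asnd (asnd a)))
      (atable s (astep_cells s r a) F).

Definition areturn s (a l : aterm) : aterm :=
  AMul (ale (asnd a) l)
    (aall (AAdd (afst a) (AConst 1))
       (AMul (aeq (acell s (AAdd (weaken l) (AConst 1)) (AVar 0) (AConst 0))
                  (acell s (AConst 0) (AVar 0) (AConst 0)))
             (aeq (acell s (AAdd (weaken l) (AConst 1)) (AConst 0) (AVar 0))
                  (acell s (AConst 0) (AConst 0) (AVar 0))))).

Definition aprefix s (l w : aterm) : aterm :=
  aeq (ASum l (AMul (AAdd (acell s (AConst 0) (AVar 0) (AConst 0)) (AConst 1))
                    (AProd (AVar 0) (AConst s)))) w.

Definition averifier s r F : aterm :=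
  AAdd (AAdd (AMul (aeq (afst (AVar 0)) (AConst 0)) (astep s r F (asnd (AVar 0))))
             (AMul (aeq (afst (AVar 0)) (AConst 1)) (areturn s (asnd (AVar 0)) (AVar 1))))
       (AMul (ale (AConst 2) (afst (AVar 0))) (aprefix s (AVar 1) (AVar 2))).

Section VerifierTerm.
Variables (C : nat -> bool) (env : seq nat).

Lemma aeval_step s r F a : 0 < s ->
  aeval C env (astep s r F a) = step_ok s r F C (aeval C env a).
Proof.
move=> s_gt0.
have cells_lt : all (fun t => aeval C env t < s) (astep_cells s r a).
  by rewrite all_map; apply/allP => t _; exact: aeval_cell_lt.
rewrite /astep aeval_eq aeval_cell (aeval_table F cells_lt) -map_comp.
rewrite aeval_add !aeval_fst !aeval_snd addn2; congr (nat_of_bool (_ == F _)).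
by apply: eq_map => t; rewrite /comp aeval_cell !aeval_add !aeval_fst !aeval_snd addn1.
Qed.

Lemma aeval_return s a l :
  aeval C env (areturn s a l) = return_ok s C (aeval C env a) (aeval C env l).
Proof.
set row := (aeval C env l).+1.
rewrite /areturn aeval_mul aeval_le aeval_snd.
rewrite (aeval_all _ (P := fun i => (oracle_cell s C row i 0 == oracle_cell s C 0 i 0) &&
                                 (oracle_cell s C row 0 i == oracle_cell s C 0 0 i))) => [|i].
  by rewrite aeval_add aeval_fst addn1 mulnb.
by rewrite aeval_mul !aeval_eq !aeval_cell aeval_add aeval_weaken addn1 mulnb.
Qed.

Lemma aeval_prefix s l w :
  aeval C env (aprefix s l w) = prefix_ok s C (aeval C env l) (aeval C env w).
Proof.
rewrite /aprefix aeval_eq aeval_sum; congr (nat_of_bool (_ == _)); apply: eq_bigr => i _.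
by rewrite aeval_mul aeval_add aeval_cell /= prod_nat_const_nat subn0.
Qed.

End VerifierTerm.

Lemma aeval_verifier s r F C m l w : 0 < s ->
  aeval C [:: m; l; w] (averifier s r F) = verifier s r F C m l w.
Proof.
move=> s_gt0; rewrite /averifier !aeval_add.
rewrite [aeval _ _ (AMul (aeq _ (AConst 0)) _)]aeval_mul.
rewrite [aeval _ _ (AMul (aeq _ (AConst 1)) _)]aeval_mul.
rewrite [aeval _ _ (AMul (ale _ _) _)]aeval_mul aeval_step // aeval_return.
rewrite aeval_prefix !aeval_eq aeval_le !aeval_fst !aeval_snd /verifier.
by case: (nfst m) => [|[|k]] /=; rewrite ?mul1n ?mul0n ?addn0.
Qed.

(** * Correctness of the verifier *)

Section AsymptoticLanguage.
Variables (S : finType) (f : config S -> config S) (a0 : S) (r : nat).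
Hypotheses (hf : is_CA f) (hr : forall x y, agree r x y -> f x 0%R = f y 0%R).

Definition local_rule (cs : seq nat) : nat := scode (f (window_config a0 r cs) 0%R).

Definition oracle_row (C : nat -> bool) (k : nat) : config S :=
  fun i => sdecode a0 (oracle_cell #|S| C k (int_pos i) (int_neg i)).

Lemma card_alphabet_gt0 : 0 < #|S|.
Proof. by apply/card_gt0P; exists a0. Qed.

Lemma oracle_rowE C k p q :
  oracle_row C k (Posz p - Posz q)%R = sdecode a0 (oracle_cell #|S| C k p q).
Proof.
by rewrite /oracle_row (oracle_cell_diff _ _ _ (_ : _ = Posz p - Posz q)%R) ?int_pos_neg.
Qed.

Lemma scode_oracle_row C k p q :
  scode (oracle_row C k (Posz p - Posz q)%R) = oracle_cell #|S| C k p q.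
Proof. by rewrite oracle_rowE sdecodeK // oracle_cell_lt // card_alphabet_gt0. Qed.

Lemma window_oracle_row C k p q :
  window (oracle_row C k) (Posz p - Posz q)%R r =
  [seq oracle_cell #|S| C k (p + t) (q + r) | t <- iota 0 (r + r).+1].
Proof.
apply: eq_map => t; rewrite -scode_oracle_row; congr (scode (oracle_row _ _ _)); lia.
Qed.

Lemma verifier_sound C w : (forall m, exists l, verifier #|S| r local_rule C m l w) ->
  exists ws, language (asymptotic_set f) ws /\ word_code ws = w.
Proof.
move=> HC.
have row_step k : oracle_row C k.+2 = f (oracle_row C k.+1).
  apply: functional_extensionality => i; rewrite -[i]int_pos_neg.
  set p := int_pos i; set q := int_neg i.
  have [l] := HC (npair 0 (npair k (npair p q))).
  rewrite /verifier nfst_pair nsnd_pair /step_ok !(nfst_pair, nsnd_pair) => /eqP cellE.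
  by rewrite oracle_rowE cellE scodeK [RHS](CA_window a0 hf hr) window_oracle_row.
have rowE k : oracle_row C k.+1 = iter k f (oracle_row C 1).
  by elim: k => // k IH; rewrite iterS -IH row_step.
have limit : omega_limit f (oracle_row C 1) (oracle_row C 0).
  move=> n N; have [l] := HC (npair 1 (npair n N)).
  rewrite /verifier nfst_pair nsnd_pair /return_ok !(nfst_pair, nsnd_pair).
  move=> /andP[hl /allP agreeE].
  exists l; split=> // -[a|a] ha; rewrite -rowE /oracle_row /=.
    by have /agreeE/andP[/eqP -> _] : a \in iota 0 n.+1 by rewrite mem_iota; lia.
  by have /agreeE/andP[_ /eqP ->] : a.+1 \in iota 0 n.+1 by rewrite mem_iota; lia.
have [l] := HC (npair 2 0); rewrite /verifier nfst_pair /prefix_ok => /eqP <-.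
exists (mkseq (fun i => oracle_row C 0 (Posz i)) l); split.
  exists (oracle_row C 0); split; last by rewrite size_mkseq.
  by exists (oracle_row C 1).
rewrite word_code_mkseq; apply: eq_bigr => i _.
by rewrite -[Posz i]subr0 scode_oracle_row.
Qed.

Definition orbit_table (x y : config S) (k : nat) (i : int) : nat :=
  scode (if k is k'.+1 then iter k' f x i else y i).

Lemma verifier_complete x y l : omega_limit f x y ->
  exists C, forall m, exists l', verifier #|S| r local_rule C m l'
                                   (word_code (mkseq (fun i => y (Posz i)) l)).
Proof.
move=> xy; exists (table_oracle (orbit_table x y)) => m.
have cellE k p q : oracle_cell #|S| (table_oracle (orbit_table x y)) k p q =
                   orbit_table x y k (Posz p - Posz q)%R.
  by apply: oracle_cell_table => k' i; exact: scode_lt.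
rewrite /verifier; case: (nfst m) => [|[|_]].
- exists 0; rewrite /step_ok !cellE /orbit_table iterS (CA_window a0 hf hr) /local_rule.
  apply/eqP; congr (scode (f (window_config a0 r _) _)).
  by apply: eq_map => t; rewrite cellE; congr (scode (iter _ f x _)); lia.
- have [k [hk agree_k]] := xy (nfst (nsnd m)) (nsnd (nsnd m)).
  exists k; rewrite /return_ok hk; apply/allP => a; rewrite mem_iota => /andP[_ ha].
  by rewrite !cellE /orbit_table subr0 sub0r !agree_k ?eqxx //=; lia.
- exists l; rewrite /prefix_ok word_code_mkseq; apply/eqP; apply: eq_bigr => i _.
  by rewrite cellE /orbit_table subr0.
Qed.

End AsymptoticLanguage.

Theorem lemma1 (S : finType) (f : config S -> config S) (hf : is_CA f) :
  Sigma11 (fun n : nat =>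
    exists w : seq S, language (asymptotic_set f) w /\ word_code w = n).
Proof.
case: (pickP (@predT S)) => [a0 _|S0]; last first.
  apply: (Sigma11_aterm (t := AConst 0) (R := fun _ _ _ _ => false)) => // w.
  split=> [[ws [[y _] _]]|[C /(_ 0) []//]].
  by have := S0 (y 0%R).
have [r hr] := uniform_local_rule hf.1.
apply: (Sigma11_aterm (t := averifier #|S| r (local_rule f a0 r))
                      (R := verifier #|S| r (local_rule f a0 r))).
  by move=> C m l w; rewrite aeval_verifier // card_alphabet_gt0.
move=> w; split=> [[ws [[y [[x xy] wsE]] <-]]|[C HC]].
  by rewrite wsE; exact: (verifier_complete a0 hf hr (size ws) xy).
exact: (verifier_sound hf hr HC).
Qed.
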